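(* For every positive integer $k$, the cycle $C_{6k}$ is edge-critical for $3$ colours; hence $\{C_{6k}: k\in\mathbb{N}\}$ is an infinite family of edge-critical graphs for $3$ colours.
   Context: An undirected graph is identified with the directed graph having both arcs for each edge; $N^-(v)$ is the set of neighbours of $v$. For $q\ge2$ let $[q]=\{0,\dots,q-1\}$. A $D$-function over $[q]$ is a map $f=(f_v)_{v\in V}:[q]^V\to[q]^V$ with each $f_v(x)$ depending only on $(x_u)_{u\in N^-(v)}$. $D$ is $q$-solvable if some $D$-function $f$ over $[q]$ has the property that for every $x\in[q]^V$ there is $v$ with $f_v(x)=x_v$. An undirected graph $G$ is edge-critical for $q$ colours if $G$ is $q$-solvable but $G-e$ (same vertex set, edge $e$ removed) is not $q$-solvable for every edge $e$ of $G$. *)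

From mathcomp Require Import all_boot.
Set Implicit Arguments.
Unset Strict Implicit.
Unset Printing Implicit Defensive.

(* A digraph on a finite vertex type V is a relation D : rel V; D u v means
   there is an arc u -> v, so N^-(v) = [pred u | D u v].  An undirected graph
   is a symmetric irreflexive relation (both arcs for each edge). *)

Definition config (V : finType) (q : nat) := {ffun V -> 'I_q}.

Definition is_Dfunction (V : finType) (D : rel V) (q : nat)
    (f : config V q -> config V q) : Prop :=
  forall (v : V) (x y : config V q),
    (forall u : V, D u v -> x u = y u) -> f x v = f y v.

Definition solvable (V : finType) (D : rel V) (q : nat) : Prop :=
  exists f : config V q -> config V q,
    @is_Dfunction V D q f /\ forall x : config V q, exists v : V, f x v = x v.

Definition remove_edge (V : finType) (D : rel V) (u w : V) : rel V :=
  fun a b => D a b && ~~ (((a == u) && (b == w)) || ((a == w) && (b == u))).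

Definition edge_critical (V : finType) (D : rel V) (q : nat) : Prop :=
  @solvable V D q /\ forall u w : V, D u w -> ~ @solvable V (remove_edge D u w) q.

Definition cycle_graph (n : nat) : rel 'I_n :=
  fun i j => (val j == (val i).+1 %% n) || (val i == (val j).+1 %% n).

From mathcomp Require Import all_boot zify.
Set Implicit Arguments.
Unset Strict Implicit.
Unset Printing Implicit Defensive.

(* C_n minus an edge is a path, and a path is not q-solvable for q >= 3
   (Section PathNotSolvable): walking along the path, for every colour b of
   the next vertex all but at most one colour a of the current vertex extend
   to a configuration fooling every vertex so far, and at the end of the
   path this yields a configuration fooling every vertex.

   C_n is 3-solvable whenever 3 divides n (Section CycleStrategy).  Vertex v
   guesses by a fixed table that depends on whether v < 3 and on v mod 3.
   A configuration fooling every vertex would be a closed walk in a transfer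
   graph on the 9 pairs of colours of consecutive vertices, made of one
   special block of three steps and n/3 - 1 regular blocks; a certificate
   checked by computation rules out such walks. *)

Definition upd (V : finType) (q : nat) (x : config V q) (v : V) (a : 'I_q) :
    config V q :=
  [ffun u => if u == v then a else x u].

Lemma upd_eq (V : finType) (q : nat) (x : config V q) v a : upd x v a v = a.
Proof. by rewrite ffunE eqxx. Qed.

Lemma upd_ne (V : finType) (q : nat) (x : config V q) v a u :
  u != v -> upd x v a u = x u.
Proof. by move=> /negbTE uv; rewrite ffunE uv. Qed.

Lemma common_colour (q : nat) (A B : 'I_q -> Prop) : 2 < q ->
    (forall a1 a2, a1 != a2 -> A a1 \/ A a2) ->
    (forall a1 a2, a1 != a2 -> B a1 \/ B a2) ->
  exists a, A a /\ B a.
Proof.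
move=> q_gt2 hA hB.
pose c0 := Ordinal (ltn_trans (isT : 0 < 2) q_gt2).
pose c1 := Ordinal (ltn_trans (isT : 1 < 2) q_gt2).
pose c2 := Ordinal q_gt2.
have [A0 | A1] := hA c0 c1 isT.
  have [B0 | B1] := hB c0 c1 isT; first by exists c0.
  have [A1 | A2] := hA c1 c2 isT; first by exists c1.
  have [B0 | B2] := hB c0 c2 isT; [by exists c0 | by exists c2].
have [B1 | B0] := hB c1 c0 isT; first by exists c1.
have [A0 | A2] := hA c0 c2 isT; first by exists c0.
have [B1 | B2] := hB c1 c2 isT; [by exists c1 | by exists c2].
Qed.

Lemma escape_guess (q : nat) (A : 'I_q -> 'I_q -> Prop) (g : 'I_q -> 'I_q)
    (c1 c2 : 'I_q) : 2 < q ->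
    (forall b a1 a2, a1 != a2 -> A a1 b \/ A a2 b) -> c1 != c2 ->
  (exists a, A a c1 /\ g a != c1) \/ (exists a, A a c2 /\ g a != c2).
Proof.
move=> q_gt2 hA c12.
have [a [A1 A2]] := common_colour q_gt2 (hA c1) (hA c2).
have [ga1 | ga1] := eqVneq (g a) c1; last by left; exists a.
by right; exists a; rewrite ga1.
Qed.

(* Paths: if the vertices of D can be listed as s 0, ..., s (n-1) so that
   every arc joins two consecutive vertices, then D is not q-solvable for any
   q >= 3.  For a D-function f, call a window (a, b) "fooled at i" if some
   configuration colours s i by a and s (i+1) by b while s 0, ..., s i all
   guess wrong.  By induction on i, for every b at most one colour a is not
   fooled at i; at the last vertex this yields a configuration where every
   vertex guesses wrong. *)
Section PathNotSolvable.
Variables (V : finType) (D : rel V) (q n : nat) (s : nat -> V).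
Hypothesis q_gt2 : 2 < q.
Hypothesis n_gt1 : 1 < n.
Hypothesis s_inj : forall i j, i < n -> j < n -> s i = s j -> i = j.
Hypothesis s_onto : forall v, exists2 i, i < n & v = s i.
Hypothesis s_path :
  forall i j, i < n -> j < n -> D (s j) (s i) -> j = i.+1 \/ j.+1 = i.

Lemma s_neq i j : i < n -> j < n -> i != j -> s i != s j.
Proof. by move=> ltin ltjn; apply: contra => /eqP /s_inj ->. Qed.

Section Fooling.
Variable f : config V q -> config V q.
Hypothesis f_local : is_Dfunction D f.

Let colour0 : 'I_q := Ordinal (ltn_trans (isT : 0 < 2) q_gt2).
Let colour1 : 'I_q := Ordinal (ltn_trans (isT : 1 < 2) q_gt2).
Let x0 : config V q := [ffun => colour0].

Lemma guess_local i (x y : config V q) : i < n ->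
    (forall j, j < n -> j = i.+1 \/ j.+1 = i -> x (s j) = y (s j)) ->
  f x (s i) = f y (s i).
Proof.
move=> ltin xy; apply: f_local => u.
have [j ltjn -> Dji] := s_onto u.
by apply: xy => //; apply: s_path.
Qed.

Lemma guess_upd i j (x : config V q) a : i < n -> j < n ->
  j != i.+1 -> j.+1 != i -> f (upd x (s j) a) (s i) = f x (s i).
Proof.
move=> ltin ltjn ji ij; apply: guess_local => // k ltkn adj.
rewrite upd_ne // s_neq //.
by case: adj => [-> | ki]; [rewrite eq_sym | rewrite -eqSS ki eq_sym].
Qed.

Definition fooled i a b := exists x : config V q,
  [/\ x (s i) = a, x (s i.+1) = b & forall j, j <= i -> f x (s j) != x (s j)].

Definition mostly_fooled i :=
  forall b a1 a2, a1 != a2 -> fooled i a1 b \/ fooled i a2 b.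

Lemma mostly_fooled0 : mostly_fooled 0.
Proof.
have lt0n : 0 < n by apply: ltn_trans n_gt1.
move=> b a1 a2 a12; set y := upd x0 (s 1) b.
have fooled_at a : a != f y (s 0) -> fooled 0 a b.
  move=> a_wrong; exists (upd y (s 0) a); split.
  - by rewrite upd_eq.
  - by rewrite upd_ne ?upd_eq // s_neq.
  - by move=> j; rewrite leqn0 => /eqP ->; rewrite upd_eq guess_upd // eq_sym.
have [a1_right | ] := eqVneq a1 (f y (s 0)); last by left; apply: fooled_at.
by right; apply: fooled_at; rewrite -a1_right eq_sym.
Qed.

Lemma mostly_fooledS i : i.+2 < n -> mostly_fooled i -> mostly_fooled i.+1.
Proof.
move=> ltin mf d c1 c2 c12.
have lt1n : i.+1 < n by apply: ltn_trans ltin.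
have lt0n : i < n by apply: ltn_trans lt1n.
pose g a := f (upd (upd x0 (s i) a) (s i.+2) d) (s i.+1).
have extend a c : fooled i a c -> g a != c -> fooled i.+1 c d.
  case=> x [xa xc x_wrong] ga; set y := upd x (s i.+2) d.
  have yi : y (s i) = a by rewrite upd_ne // s_neq // neq_ltn ltnS leqnSn.
  have yi1 : y (s i.+1) = c by rewrite upd_ne // s_neq // neq_ltn ltnSn.
  exists y; split => // [|j]; first by rewrite upd_eq.
  rewrite leq_eqVlt => /orP [/eqP -> | ltji].
    rewrite yi1 (_ : f y (s i.+1) = g a) //; apply: guess_local => // k _.
    case=> [-> | [->]]; first by rewrite !upd_eq.
    by rewrite yi upd_ne ?upd_eq // s_neq // neq_ltn ltnS leqnSn.
  have ltjn : j < n by apply: ltn_trans lt1n.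
  by rewrite upd_ne ?guess_upd ?x_wrong ?s_neq //; lia.
have [[a [fa ga]] | [a [fa ga]]] := escape_guess g q_gt2 mf c12.
  by left; apply: extend fa ga.
by right; apply: extend fa ga.
Qed.

Lemma mostly_fooled_all i : i.+1 < n -> mostly_fooled i.
Proof.
elim: i => [_ | i IHi ltin]; first exact: mostly_fooled0.
by apply: mostly_fooledS => //; apply: IHi; apply: ltn_trans ltin.
Qed.

(* The last vertex s (n-1) sees only s (n-2), so it can be fooled too. *)
Lemma fooled_everywhere : exists x, forall j, j < n -> f x (s j) != x (s j).
Proof.
have [m def_n] : exists m, n = m.+2 by exists n.-2; lia.
have ltmn : m < n by lia.
pose g a := f (upd x0 (s m) a) (s m.+1).
have c01 : colour0 != colour1 by [].
have mf : mostly_fooled m by apply: mostly_fooled_all; rewrite def_n.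
suff fool_last a c : fooled m a c -> g a != c ->
    exists x, forall j, j < n -> f x (s j) != x (s j).
  by have [[a []] | [a []]] := escape_guess g q_gt2 mf c01; apply: fool_last.
case=> x [xa xc x_wrong] ga; exists x => j ltjn.
have [lejm | ltmj] := leqP j m; first exact: x_wrong.
have -> : j = m.+1 by lia.
rewrite xc (_ : f x (s m.+1) = g a) //; apply: guess_local => [|k ltkn]; first lia.
by case=> [def_k | [->]]; [lia | rewrite xa upd_eq].
Qed.
End Fooling.

Lemma path_not_solvable : ~ solvable D q.
Proof.
case=> f [f_local f_wins]; have [x x_wrong] := fooled_everywhere f_local.
have [v /eqP right_v] := f_wins x; have [j ltjn def_v] := s_onto v.
by move: (x_wrong j ltjn); rewrite -def_v right_v.
Qed.

End PathNotSolvable.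

Lemma succ_mod_cases (n i j : nat) : i < n -> j < n ->
  i = j.+1 %[mod n] -> i = j.+1 \/ (i = 0 /\ j = n.-1).
Proof.
move=> ltin ltjn; rewrite modn_small //.
have [ltj1n | ] := ltnP j.+1 n; first by rewrite modn_small //; left.
move=> lenj1; have -> : j.+1 = n by lia.
by rewrite modnn; right; split; lia.
Qed.

Lemma modn_succ_mod (i n : nat) : (i %% n).+1 %% n = i.+1 %% n.
Proof. by rewrite -addn1 modnDml addn1. Qed.

Section CycleIndex.
Variables (n : nat) (n_gt0 : 0 < n).

Definition vertex (i : nat) : 'I_n := Ordinal (ltn_pmod i n_gt0).

Lemma vertexE i j : (vertex i == vertex j) = (i == j %[mod n]).
Proof. by []. Qed.

Lemma vertex_val (v : 'I_n) : vertex v = v.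
Proof. by apply: val_inj; rewrite /= modn_small. Qed.

Lemma cycle_graph_vertex i j :
  cycle_graph (vertex i) (vertex j) = (j == i.+1 %[mod n]) || (i == j.+1 %[mod n]).
Proof. by rewrite /cycle_graph /= !modn_succ_mod. Qed.

End CycleIndex.

(* Removing the edge {u, u+1} from C_n leaves the path
   u+1, u+2, ..., u+n = u, hence a graph that is not q-solvable, q >= 3. *)
Lemma cycle_minus_succ_edge_not_solvable (n q : nat) (u w : 'I_n) :
    1 < n -> 2 < q -> val w = u.+1 %% n ->
  ~ solvable (remove_edge (@cycle_graph n) u w) q.
Proof.
move=> n_gt1 q_gt2 def_w; have n_gt0 : 0 < n by lia.
pose s i := vertex n_gt0 (w + i).
have s_first : s 0 = w by rewrite /s addn0 vertex_val.
have s_last : s n.-1 = u.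
  apply: val_inj; rewrite /= def_w modnDml addSnnS prednK // modnDr modn_small //.
have adj_mod i j : (w + i == (w + j).+1 %[mod n]) = (i == j.+1 %[mod n]).
  by rewrite -addnS eqn_modDl.
apply: (@path_not_solvable _ _ q n s q_gt2 n_gt1).
- by move=> i j ltin ltjn /eqP; rewrite vertexE eqn_modDl !modn_small // => /eqP.
- move=> v; exists ((v + (n - w)) %% n); first exact: ltn_pmod.
  apply: val_inj; rewrite /= modnDmr.
  have -> : w + (v + (n - w)) = v + n by have := ltn_ord w; lia.
  by rewrite modnDr modn_small.
- move=> i j ltin ltjn; rewrite /remove_edge cycle_graph_vertex.
  case/andP; rewrite !adj_mod => adj not_uw.
  case/orP: adj => /eqP adj.
    have [-> | [i0 j_last]] := succ_mod_cases ltin ltjn adj; first by right.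
    by rewrite i0 j_last s_first s_last !eqxx in not_uw.
  have [-> | [j0 i_last]] := succ_mod_cases ltjn ltin adj; first by left.
  by rewrite j0 i_last s_first s_last !eqxx orbT in not_uw.
Qed.

Lemma solvable_eq2 (V : finType) (D D' : rel V) (q : nat) :
  D =2 D' -> solvable D q -> solvable D' q.
Proof.
move=> eqD [f [f_local f_wins]]; exists f; split => // v x y xy.
by apply: f_local => u Duv; apply: xy; rewrite -eqD.
Qed.

Lemma remove_edge_sym (V : finType) (D : rel V) (u w : V) :
  remove_edge D u w =2 remove_edge D w u.
Proof. by move=> a b; rewrite /remove_edge orbC. Qed.

Lemma cycle_minus_edge_not_solvable (n q : nat) (u w : 'I_n) :
    1 < n -> 2 < q -> cycle_graph u w ->
  ~ solvable (remove_edge (@cycle_graph n) u w) q.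
Proof.
move=> n_gt1 q_gt2 /orP [/eqP def_w | /eqP def_u].
  exact: cycle_minus_succ_edge_not_solvable.
move/(solvable_eq2 (remove_edge_sym _ _ _)).
exact: cycle_minus_succ_edge_not_solvable.
Qed.

(* Transfer graph.  A state is the pair of colours of two consecutive vertices
   of the cycle. *)
Definition state := ('I_3 * 'I_3)%type.

(* Explicit enumerations, so that the certificate below can be evaluated. *)
Definition colours : seq 'I_3 :=
  [:: Ordinal (isT : 0 < 3); Ordinal (isT : 1 < 3); Ordinal (isT : 2 < 3)].

Definition states : seq state := [seq (a, b) | a <- colours, b <- colours].

Lemma mem_states (p : state) : p \in states.
Proof.
have mem_colours (c : 'I_3) : c \in colours.
  by case: c => [[|[|[|c]]] ltc3].
by case: p => a b; apply: allpairs_f.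
Qed.

(* The guessing rules: [rule special r a c] is the guess of a vertex of
   class r (its index mod 3) seeing colours a and c on its two neighbours;
   the special tables are used by vertices 0, 1, 2 and the regular ones by
   all other vertices.  Entries are indexed by 3a + c; they are below 3, and
   reducing them modulo 3 just makes them elements of 'I_3. *)
Definition table (special : bool) : seq (seq nat) :=
  if special then
    [:: [:: 0; 1; 0; 0; 2; 2; 1; 1; 2];
        [:: 1; 2; 1; 0; 2; 2; 0; 0; 1];
        [:: 2; 1; 2; 1; 1; 0; 2; 0; 0]]
  else
    [:: [:: 0; 1; 0; 0; 2; 2; 1; 1; 2];
        [:: 2; 1; 1; 2; 2; 0; 0; 1; 0];
        [:: 1; 1; 0; 2; 0; 0; 2; 1; 2]].

Definition rule (special : bool) (r : nat) (a c : 'I_3) : 'I_3 :=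
  let entry := nth 0 (nth [::] (table special) r) (3 * a + c) in
  Ordinal (ltn_pmod entry (isT : 0 < 3)).

(* [step special r p p']: p = (x (v-1), x v) and p' = (x v, x (v+1)) for a
   configuration x in which vertex v, guessing by [rule special r], is
   wrong. *)
Definition step (special : bool) (r : nat) : rel state :=
  fun p p' => (p.2 == p'.1) && (rule special r p.1 p'.2 != p.2).

Definition rel_comp (e1 e2 : rel state) : rel state :=
  fun p p'' => has (fun p' => e1 p p' && e2 p' p'') states.

Definition block (special : bool) : rel state :=
  rel_comp (step special 0) (rel_comp (step special 1) (step special 2)).

(* States reachable from p by e-steps (9 rounds of breadth-first search;
   only the properties checked by the certificate are used). *)
Definition reach (e : rel state) (p : state) : seq state :=
  iter 9 (fun X => undup (X ++ [seq p' <- states | has (e^~ p') X])) [:: p].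

Definition fooling_free (p : state) (R : seq state) : bool :=
  [&& p \in R,
      all (fun p' => (p' \in R) ==>
             all (fun p'' => block false p' p'' ==> (p'' \in R)) states) states
    & all (fun p' => block true p' p ==> (p' \notin R)) states].

Lemma certificate_ok :
  all (fun p => fooling_free p (reach (block false) p)) states.
Proof. by vm_compute. Qed.

Lemma fooling_freeP p : fooling_free p (reach (block false) p).
Proof. exact: allP certificate_ok p (mem_states p). Qed.

Lemma reach_refl p : p \in reach (block false) p.
Proof. by have := fooling_freeP p; rewrite /fooling_free => /and3P []. Qed.

Lemma reach_closed p p' p'' : p' \in reach (block false) p ->
  block false p' p'' -> p'' \in reach (block false) p.
Proof.
move=> Rp'; have := fooling_freeP p; rewrite /fooling_free => /and3P [_ R_closed _].
move: R_closed => /allP /(_ p' (mem_states _)) /implyP /(_ Rp').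
by move=> /allP /(_ p'' (mem_states _)) /implyP.
Qed.

Lemma reach_no_special p p' :
  p' \in reach (block false) p -> ~~ block true p' p.
Proof.
move=> Rp'; have := fooling_freeP p; rewrite /fooling_free => /and3P [_ _ no_back].
move: no_back => /allP /(_ p' (mem_states _)) /implyP.
by move=> back; apply/negP => /back; rewrite Rp'.
Qed.

Lemma rel_compP (e1 e2 : rel state) p p' p'' :
  e1 p p' -> e2 p' p'' -> rel_comp e1 e2 p p''.
Proof. by move=> e1p e2p; apply/hasP; exists p'; rewrite ?mem_states ?e1p. Qed.

Lemma no_fooling_cycle (walk : nat -> state) (m : nat) :
    (forall j, j < m -> block false (walk j) (walk j.+1)) ->
  ~~ block true (walk m) (walk 0).
Proof.
move=> walk_step; apply: reach_no_special.
suff R_walk j : j <= m -> walk j \in reach (block false) (walk 0) by apply: R_walk.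
elim: j => [_ | j IHj ltjm]; first exact: reach_refl.
exact: reach_closed (IHj (ltnW ltjm)) (walk_step j ltjm).
Qed.

Section CycleStrategy.
Variables (n : nat) (n_gt0 : 0 < n).
Hypothesis three_dvd_n : 3 %| n.

Let vtx := vertex n_gt0.

Lemma n_ge3 : 3 <= n.
Proof. by rewrite dvdn_leq. Qed.

Definition strategy (x : config 'I_n 3) : config 'I_n 3 :=
  [ffun v : 'I_n => rule (v < 3) (v %% 3) (x (vtx (v + n.-1))) (x (vtx v.+1))].

Lemma strategy_local : is_Dfunction (@cycle_graph n) strategy.
Proof.
move=> v x y xy; rewrite !ffunE; congr rule; apply: xy;
  rewrite -[X in cycle_graph _ X](vertex_val n_gt0 v) cycle_graph_vertex.
  by rewrite -addnS prednK // modnDr eqxx.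
by rewrite eqxx orbT.
Qed.

Section FooledConfiguration.
Variable x : config 'I_n 3.
Hypothesis fooled : forall v, strategy x v != x v.

Let window (i : nat) : state := (x (vtx i), x (vtx i.+1)).

Lemma window_periodic i : window (i + n) = window i.
Proof.
by rewrite /window -addSn; congr (x _, x _); apply: val_inj; rewrite /= modnDr.
Qed.

Lemma fooled_step i :
  0 < i -> step (i %% n < 3) (i %% 3) (window i.-1) (window i).
Proof.
move=> i_gt0; have := fooled (vtx i); rewrite ffunE.
have -> : vtx (vtx i + n.-1) = vtx i.-1.
  apply: val_inj; rewrite /= modnDml.
  have -> : i + n.-1 = i.-1 + n by lia.
  by rewrite modnDr.
have -> : vtx (vtx i).+1 = vtx i.+1 by apply: val_inj; rewrite /= modn_succ_mod.
by rewrite /step /= prednK // eqxx /= modn_dvdm.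
Qed.

(* Vertices 0, 1, 2 (read as n, 1, 2) form the special block. *)
Lemma special_block : block true (window n.-1) (window 2).
Proof.
have n_gt2 := n_ge3.
rewrite /block; apply: (@rel_compP _ _ _ (window 0)).
  have := fooled_step n_gt0; rewrite modnn (eqP three_dvd_n).
  by rewrite -(window_periodic 0).
apply: (@rel_compP _ _ _ (window 1)).
  by have := @fooled_step 1 isT; rewrite !modn_small //; lia.
by have := @fooled_step 2 isT; rewrite !modn_small //; lia.
Qed.

Lemma regular_block j :
  j * 3 + 5 < n -> block false (window (j * 3 + 2)) (window (j * 3 + 5)).
Proof.
move=> lt_n.
have block_step r : r < 3 ->
    step false r (window (j * 3 + 2 + r)) (window (j * 3 + 3 + r)).
  move=> ltr3; have pos_gt0 : 0 < j * 3 + 3 + r by lia.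
  have := fooled_step pos_gt0.
  have -> : (j * 3 + 3 + r) %% 3 = r by rewrite -addnA modnMDl modnDl modn_small.
  rewrite modn_small; last by lia.
  have -> : (j * 3 + 3 + r < 3) = false by lia.
  by have -> : (j * 3 + 3 + r).-1 = j * 3 + 2 + r by lia.
rewrite /block; apply: (@rel_compP _ _ _ (window (j * 3 + 3))).
  by have := block_step 0 isT; rewrite !addn0.
apply: (@rel_compP _ _ _ (window (j * 3 + 4))).
  by have := block_step 1 isT; rewrite -!addnA.
by have := block_step 2 isT; rewrite -!addnA.
Qed.

(* The windows at 2, 5, ..., n-1 are joined by regular blocks, and the
   special block closes the walk. *)
Lemma fooled_contradiction : False.
Proof.
have [m def_n] : exists m, n = m.+1 * 3.
  by exists (n %/ 3).-1; rewrite prednK ?divnK // divn_gt0 // n_ge3.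
have walk j : j < m -> block false (window (j * 3 + 2)) (window (j.+1 * 3 + 2)).
  move=> ltjm; have -> : j.+1 * 3 + 2 = j * 3 + 5 by lia.
  by apply: regular_block; rewrite def_n; lia.
have last_pos : m * 3 + 2 = n.-1 by rewrite def_n; lia.
move: (@no_fooling_cycle (fun j => window (j * 3 + 2)) m walk).
by rewrite /= last_pos special_block.
Qed.
End FooledConfiguration.

Lemma strategy_wins x : exists v, strategy x v = x v.
Proof.
have [/existsP [v /eqP right_v] | /existsPn fooled] :=
  boolP [exists v, strategy x v == x v]; first by exists v.
by case: (fooled_contradiction fooled).
Qed.

Lemma cycle_solvable : solvable (@cycle_graph n) 3.
Proof. by exists strategy; split; [exact: strategy_local | exact: strategy_wins]. Qed.
End CycleStrategy.

Theorem theorem17 (k : nat) (hk : 0 < k) :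
  @edge_critical 'I_(6 * k) (@cycle_graph (6 * k)) 3.
Proof.
have n_gt0 : 0 < 6 * k by rewrite muln_gt0.
split; first exact: (cycle_solvable n_gt0 (dvdn_mulr k (isT : 3 %| 6))).
by move=> u w uw; apply: cycle_minus_edge_not_solvable => //; lia.
Qed.
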